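(* Assume the setting in the context, with $0<\lambda<\eta<1$. Then $\lim_{k\to\infty}\|\nabla f(\theta_k)\|=0$.
   Context: Let $g:\mathbb{R}^n\to\mathbb{R}$, $h:\mathbb{R}^n\times\mathbb{R}^d\to\mathbb{R}$ satisfy: (A1) $h$ is twice differentiable in $x$, for each $\theta$ there are $0<\mu(\theta)\le L(\theta)$ with $\mu(\theta)I\preceq\nabla_x^2h(x,\theta)\preceq L(\theta)I$ for all $x$, and $\nabla_xh,\nabla^2_xh$ are continuous in $\theta$; (A2) $\nabla_x^2h$ is $L_H$-Lipschitz in $x$ and $\nabla^2_{x\theta}h$ is $L_J$-Lipschitz in $x$, uniformly in $\theta$. Let $\hat{x}(\theta)=\arg\min_xh(x,\theta)$, $f(\theta)=g(\hat{x}(\theta))$. (B) $f$ is continuously differentiable with $L_{\nabla f}$-Lipschitz gradient, $g$ continuously differentiable with $L_{\nabla g}$-Lipschitz gradient, $L_{\nabla f},L_{\nabla g}>0$, $g$ bounded below. Fix $\beta_0>0$, $0<\underline{\rho}<1<\overline{\rho}$, $\lambda<\eta$. Consider sequences $\theta_k\in\mathbb{R}^d$, $z_k\in\mathbb{R}^d\setminus\{0\}$, $\epsilon_k\ge0$, $\tilde{x}_k\in\mathbb{R}^n$ with $\|\tilde{x}_k-\hat{x}(\theta_k)\|\le\epsilon_k$, $\alpha_k,\beta_k>0$, with $\theta_{k+1}=\theta_k-\alpha_kz_k$ and $\|z_k-\nabla f(\theta_k)\|\le(1-\eta)\|z_k\|$ for all $k$. Set $w_k=\|\nabla g(\tilde{x}_k)\|+\|\nabla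 g(\tilde{x}_{k+1})\|$, $\bar{\epsilon}_k=\max\{\epsilon_k,\epsilon_{k+1}\}$, $\hat{s}_k=\sqrt{(\eta-\lambda)^2-4L_{\nabla f}(w_k\bar{\epsilon}_k+L_{\nabla g}\bar{\epsilon}_k^2)/\|z_k\|^2}$ (assumed real), $\underline{\alpha}_k=(\eta-\lambda-\hat{s}_k)/L_{\nabla f}$, $\overline{\alpha}_k=(\eta-\lambda+\hat{s}_k)/L_{\nabla f}$. Assume for every $k$: $\alpha_k=\underline{\rho}^{i_k}\beta_k$ where $i_k$ is the smallest nonnegative integer with $\underline{\rho}^{i_k}\beta_k\in[\underline{\alpha}_k,\overline{\alpha}_k]$; if $i_k>0$ then $\alpha_k>\underline{\rho}\,\overline{\alpha}_k$; and $\beta_{k+1}=\overline{\rho}\alpha_k$. *)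

From HB Require Import structures.
From mathcomp Require Import all_boot all_order all_algebra.
From mathcomp Require Import all_classical all_reals all_analysis.
Set Implicit Arguments. Unset Strict Implicit. Unset Printing Implicit Defensive.
Import Order.TTheory GRing.Theory Num.Theory.
Import numFieldNormedType.Exports.
Local Open Scope ring_scope.

Section Defs.
Variable R : realType.

Definition dotr {n : nat} (u v : 'rV[R]_n) : R := \sum_(i < n) u ord0 i * v ord0 i.
Definition enorm {n : nat} (u : 'rV[R]_n) : R := Num.sqrt (dotr u u).

Definition ebasis {n : nat} (i : 'I_n) : 'rV[R]_n := delta_mx ord0 i.

Definition grad {n : nat} (f : 'rV[R]_n -> R) (x : 'rV[R]_n) : 'rV[R]_n :=
  \row_i ('D_(ebasis i) f x).

Definition C1 {n : nat} (f : 'rV[R]_n -> R) : Prop :=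
  (forall x, differentiable f x) /\ continuous (grad f).

Definition lipschitz_grad {n : nat} (f : 'rV[R]_n -> R) (L : R) : Prop :=
  forall x y, enorm (grad f x - grad f y) <= L * enorm (x - y).

Definition gradx {n d : nat} (h : 'rV[R]_n -> 'rV[R]_d -> R) x theta : 'rV[R]_n :=
  grad (fun y => h y theta) x.

Definition hessx {n d : nat} (h : 'rV[R]_n -> 'rV[R]_d -> R) x theta : 'M[R]_n :=
  \matrix_(i, j) 'D_(ebasis j) (fun y => gradx h y theta ord0 i) x.

Definition hessxt {n d : nat} (h : 'rV[R]_n -> 'rV[R]_d -> R) x theta : 'M[R]_(n, d) :=
  \matrix_(i, j) 'D_(ebasis j) (fun t => gradx h x t ord0 i) theta.

Definition qform {n : nat} (A : 'M[R]_n) (v : 'rV[R]_n) : R := (v *m A *m v^T) ord0 ord0.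

End Defs.

(* Every accepted step alpha_k lies below the upper end of its interval, and
   that end satisfies L_f * ahi_k <= 2 (eta - lam); with the relative error
   |z_k - grad f| <= (1 - eta) |z_k|, the descent lemma for the L_f-smooth f
   then gives f(theta_(k+1)) <= f(theta_k) - alpha_k lam |z_k|^2.  The
   backtracking rule keeps alpha_k >= min(alpha_0, rho_lo (eta - lam) / L_f):
   a step either enlarges the previous one by rho_hi > 1 or exceeds rho_lo
   ahi_k >= rho_lo (eta - lam) / L_f.  As f = g o xhat is bounded below, the
   |z_k|^2 are summable, so z_k -> 0, and |grad f(theta_k)| <= (2 - eta) |z_k|. *)

From HB Require Import structures.
From mathcomp Require Import all_boot all_order all_algebra.
From mathcomp Require Import all_classical all_reals all_analysis.
From mathcomp Require Import ring lra.
Import Order.TTheory GRing.Theory Num.Theory.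
Import numFieldNormedType.Exports.
Local Open Scope classical_set_scope.
Local Open Scope ring_scope.

Set Implicit Arguments.
Unset Strict Implicit.

Section Euclidean.
Variables (R : realType) (n : nat).
Implicit Types u v w : 'rV[R]_n.

Lemma dotrC u v : dotr u v = dotr v u.
Proof. by apply: eq_bigr => i _; rewrite mulrC. Qed.

Lemma dotrDl u v w : dotr (u + v) w = dotr u w + dotr v w.
Proof. by rewrite /dotr -big_split; apply: eq_bigr => i _; rewrite mxE mulrDl. Qed.

Lemma dotrDr u v w : dotr u (v + w) = dotr u v + dotr u w.
Proof. by rewrite dotrC dotrDl !(dotrC u). Qed.

Lemma dotrZl (a : R) u w : dotr (a *: u) w = a * dotr u w.
Proof. by rewrite /dotr mulr_sumr; apply: eq_bigr => i _; rewrite mxE mulrA. Qed.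

Lemma dotrBl u v w : dotr (u - v) w = dotr u w - dotr v w.
Proof. by rewrite -scaleN1r dotrDl dotrZl mulN1r. Qed.

Lemma dotr_ge0 u : 0 <= dotr u u.
Proof. by apply: sumr_ge0 => i _; rewrite -expr2 sqr_ge0. Qed.

Lemma enorm_ge0 u : 0 <= enorm u.
Proof. exact: sqrtr_ge0. Qed.

Lemma enorm_sqr u : enorm u ^+ 2 = dotr u u.
Proof. by rewrite sqr_sqrtr // dotr_ge0. Qed.

Lemma dotr_eq0l u v : dotr u u = 0 -> dotr u v = 0.
Proof.
move=> /psumr_eq0P u0; rewrite /dotr big1 // => i _.
have /eqP : u ord0 i * u ord0 i = 0 by apply: u0 => // j _; rewrite -expr2 sqr_ge0.
by rewrite mulf_eq0 orbb => /eqP ->; rewrite mul0r.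
Qed.

Lemma cauchy_schwarz_sqr u v : dotr u v ^+ 2 <= dotr u u * dotr v v.
Proof.
have [u0|u_neq0] := eqVneq (dotr u u) 0.
  by rewrite dotr_eq0l // u0 expr0n mul0r.
have u_gt0 : 0 < dotr u u by rewrite lt_def u_neq0 dotr_ge0.
set a := dotr u u in u_neq0 u_gt0 *; set b := dotr u v; set c := dotr v v.
(* expand |t u + v|^2 >= 0 at the minimizing t = - b / a *)
have := dotr_ge0 ((- b / a) *: u + v).
rewrite dotrDl !dotrDr dotrZl !(dotrC _ (_ *: _)) !dotrZl -/a -/b -/c.
have -> : - b / a * (- b / a * a) + - b / a * b + (- b / a * b + c) = c - b ^+ 2 / a.
  by field.
by rewrite subr_ge0 ler_pdivrMr // mulrC.
Qed.

Lemma cauchy_schwarz u v : dotr u v <= enorm u * enorm v.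
Proof.
apply: le_trans (ler_norm _) _; rewrite -sqrtr_sqr -sqrtrM ?dotr_ge0 //.
by rewrite ler_sqrt ?cauchy_schwarz_sqr // mulr_ge0 ?dotr_ge0.
Qed.

Lemma enormD u v : enorm (u + v) <= enorm u + enorm v.
Proof.
rewrite -ler_sqr ?nnegrE ?addr_ge0 ?enorm_ge0 // sqrrD !enorm_sqr.
rewrite dotrDl !dotrDr (dotrC v u).
have := cauchy_schwarz u v; lra.
Qed.

Lemma enormZ (a : R) u : enorm (a *: u) = `|a| * enorm u.
Proof.
by rewrite /enorm dotrZl dotrC dotrZl mulrA -expr2 sqrtrM ?sqr_ge0 // sqrtr_sqr.
Qed.

Lemma enormN u : enorm (- u) = enorm u.
Proof. by rewrite -scaleN1r enormZ normrN normr1 mul1r. Qed.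

End Euclidean.

Section Descent.
Variables (R : realType) (n : nat).
Implicit Types (f : 'rV[R]_n -> R) (x v : 'rV[R]_n).

Lemma derive_grad f x v : differentiable f x -> 'D_v f x = dotr (grad f x) v.
Proof.
move=> dfx; rewrite deriveE // {1}(row_sum_delta v) linear_sum /dotr.
by apply: eq_bigr => i _; rewrite linearZ /= mxE deriveE // mulrC.
Qed.

Lemma is_derive_line f x v t : differentiable f (x + t *: v) ->
  is_derive t 1 (fun s => f (x + s *: v)) (dotr (grad f (x + t *: v)) v).
Proof.
move=> dfx.
have shiftE : (fun h : R => h^-1 *: (((fun s => f (x + s *: v)) \o shift t) (h *: 1)
                                     - f (x + t *: v)))
            = (fun h => h^-1 *: ((f \o shift (x + t *: v)) (h *: v) - f (x + t *: v))).
  apply: funext => h /=; congr (_ *: (_ - _)); congr f.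
  by rewrite /shift /= scalerDl [h *: 1]mulr1 addrCA addrA.
apply: DeriveDef; first by rewrite /derivable shiftE; exact: diff_derivable.
by rewrite /derive shiftE -/(derive f (x + t *: v) v) derive_grad.
Qed.

Lemma descent_lemma f (L : R) x v :
  (forall p, differentiable f p) -> lipschitz_grad f L ->
  f (x + v) <= f x + dotr (grad f x) v + L / 2 * enorm v ^+ 2.
Proof.
move=> df lipf; set b := dotr (grad f x) v; set c := L / 2 * enorm v ^+ 2.
pose phi s := f (x + s *: v) - (b * s + c * s ^+ 2).
pose dphi s := dotr (grad f (x + s *: v)) v - (b + c * (2 * s)).
have phi_derive (s : R) : is_derive s 1 phi (dphi s).
  apply: is_deriveB; first exact: is_derive_line.
  by apply: is_derive_eq; rewrite /GRing.scale /= !mulr1; ring.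
have dphi_le0 (s : R) : 0 < s -> dphi s <= 0.
  move=> s_gt0; rewrite subr_le0 -lerBlDl /b -dotrBl.
  apply: le_trans (cauchy_schwarz _ _) _.
  have := lipf (x + s *: v) x; rewrite addrAC subrr add0r enormZ gtr0_norm // => lip.
  apply: le_trans (ler_wpM2r (enorm_ge0 _) lip) _.
  by rewrite /c le_eqVlt; apply/orP; left; apply/eqP; field.
have : phi 1 <= phi 0.
  apply: (@ler0_derive1_nincr _ phi 0 1) => //.
  - move=> s; rewrite in_itv /= => /andP[s_gt0 _].
    by rewrite derive1E derive_val; exact: dphi_le0.
  - apply: continuous_subspaceT => s.
    by apply/differentiable_continuous/derivable1_diffP; case: (phi_derive s).
rewrite /phi scale1r scale0r addr0 expr1n expr0n /= !mulr0 !mulr1; lra.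
Qed.

End Descent.

Section InexactGradientStep.
Variables (R : realType) (n : nat).
Implicit Types (G z : 'rV[R]_n) (eta : R).

Lemma inexact_grad_dotr G z eta :
  enorm (z - G) <= (1 - eta) * enorm z -> eta * enorm z ^+ 2 <= dotr G z.
Proof.
move=> zG; have := cauchy_schwarz (z - G) z.
rewrite dotrBl -enorm_sqr.
have := ler_wpM2r (enorm_ge0 z) zG; rewrite expr2; lra.
Qed.

Lemma inexact_grad_enorm G z eta :
  enorm (z - G) <= (1 - eta) * enorm z -> enorm G <= (2 - eta) * enorm z.
Proof.
move=> zG; have := enormD z (G - z).
by rewrite addrC subrK -opprB enormN; lra.
Qed.

Lemma sufficient_decrease (F : 'rV[R]_n -> R) (L eta lam alpha : R) x z :
  (forall p, differentiable F p) -> lipschitz_grad F L ->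
  enorm (z - grad F x) <= (1 - eta) * enorm z ->
  0 <= alpha -> L * alpha <= 2 * (eta - lam) ->
  F (x - alpha *: z) <= F x - alpha * lam * enorm z ^+ 2.
Proof.
move=> dF lipF zG alpha_ge0 L_alpha.
have := descent_lemma x (- (alpha *: z)) dF lipF.
rewrite enormN enormZ ger0_norm // dotrC -scaleNr dotrZl dotrC.
have := inexact_grad_dotr zG.
have := ler_wpM2r (mulr_ge0 alpha_ge0 (sqr_ge0 (enorm z))) L_alpha.
nra.
Qed.

End InexactGradientStep.

Lemma backtracking_step_ge (R : realType) (alpha ahi : nat -> R) (rho_lo rho_hi c : R) :
  0 <= rho_lo -> 1 <= rho_hi -> (forall k, 0 <= alpha k) -> (forall k, c <= ahi k) ->
  (forall k, alpha k.+1 = rho_hi * alpha k \/ rho_lo * ahi k.+1 < alpha k.+1) ->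
  forall k, Num.min (alpha 0%N) (rho_lo * c) <= alpha k.
Proof.
move=> rho_lo_ge0 rho_hi_ge1 alpha_ge0 ahi_ge alphaS.
elim=> [|k IHk]; first by rewrite ge_min lexx.
case: (alphaS k) => [->|ahi_lt].
  by apply: le_trans IHk _; rewrite ler_peMl.
by rewrite ge_min (le_trans (ler_wpM2l rho_lo_ge0 (ahi_ge k.+1)) (ltW ahi_lt)) orbT.
Qed.

Lemma bounded_descent_cvg0 (R : realType) (F u : nat -> R) (c M : R) :
  0 < c -> (forall k, 0 <= u k) -> (forall k, M <= F k) ->
  (forall k, F k.+1 <= F k - c * u k) -> u k @[k --> \oo] --> 0.
Proof.
move=> c_gt0 u_ge0 F_ge FS.
have partial_le N : c * series u N <= F 0%N - F N.
  elim: N => [|N IHN]; first by rewrite /series /= big_geq // mulr0 subrr.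
  by rewrite /series /= big_nat_recr //= mulrDr; move: IHN (FS N); rewrite /series /=; lra.
apply: cvg_series_cvg_0; apply: nondecreasing_is_cvgn.
  by apply: nondecreasing_series => k _ _; exact: u_ge0.
exists ((F 0%N - M) / c) => _ [N _ <-].
by rewrite ler_pdivlMr // mulrC; move: (partial_le N) (F_ge N); lra.
Qed.

Lemma sqrtr_sqrB_le (R : rcfType) (a t : R) :
  0 <= a -> 0 <= t -> Num.sqrt (a ^+ 2 - t) <= a.
Proof.
move=> a_ge0 t_ge0; rewrite -[leRHS]ger0_norm // -sqrtr_sqr ler_sqrt ?sqr_ge0 //.
by rewrite lerBlDr lerDl.
Qed.

Lemma step_upper_end_bounds (R : rcfType) (a L t : R) : 0 <= a -> 0 < L -> 0 <= t ->
  a / L <= (a + Num.sqrt (a ^+ 2 - t)) / L /\ L * ((a + Num.sqrt (a ^+ 2 - t)) / L) <= 2 * a.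
Proof.
move=> a_ge0 L_gt0 t_ge0; split; first by rewrite ler_pM2r ?invr_gt0 // lerDl sqrtr_ge0.
by rewrite mulrCA divff ?gt_eqF // mulr1 mulr2n mulrDl mul1r lerD2l sqrtr_sqrB_le.
Qed.

Lemma sqr_cvg0 (R : realType) (u : nat -> R) : (forall k, 0 <= u k) ->
  u k ^+ 2 @[k --> \oo] --> 0 -> u k @[k --> \oo] --> 0.
Proof.
move=> u_ge0 /(continuous_cvg _ (@sqrt_continuous R 0)); rewrite sqrtr0.
suff -> : Num.sqrt \o (fun k => u k ^+ 2) = u by [].
by apply: funext => k /=; rewrite sqrtr_sqr ger0_norm.
Qed.

Theorem corollary3p16 (R : realType) (n d : nat)
  (g : 'rV[R]_n -> R) (h : 'rV[R]_n -> 'rV[R]_d -> R)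
  (mu L : 'rV[R]_d -> R) (L_H L_J L_f L_g : R)
  (xhat : 'rV[R]_d -> 'rV[R]_n)
  (beta0 rho_lo rho_hi lam eta : R)
  (theta z : nat -> 'rV[R]_d) (eps : nat -> R) (xt : nat -> 'rV[R]_n)
  (alpha beta : nat -> R) (i : nat -> nat) :
  (* (A1) *)
  (forall th x, differentiable (fun y => h y th) x) ->
  (forall th x, differentiable (fun y => gradx h y th) x) ->
  (forall th, 0 < mu th /\ mu th <= L th) ->
  (forall th x v, mu th * enorm v ^+ 2 <= qform (hessx h x th) v
                  /\ qform (hessx h x th) v <= L th * enorm v ^+ 2) ->
  (forall x, continuous (fun th => gradx h x th)) ->
  (forall x, continuous (fun th => hessx h x th)) ->
  (* (A2) *)
  (forall th x y v, enorm (v *m (hessx h x th - hessx h y th))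
                    <= L_H * enorm (x - y) * enorm v) ->
  (forall x th, differentiable (fun t => gradx h x t) th) ->
  (forall th x y (u : 'rV[R]_d), enorm (u *m (hessxt h x th - hessxt h y th)^T)
                    <= L_J * enorm (x - y) * enorm u) ->
  (* xhat(theta) = argmin_x h(x, theta) *)
  (forall th x, h (xhat th) th <= h x th) ->
  (* (B), with f = g o xhat *)
  C1 (g \o xhat) -> lipschitz_grad (g \o xhat) L_f ->
  C1 g -> lipschitz_grad g L_g ->
  0 < L_f -> 0 < L_g ->
  (exists m, forall x, m <= g x) ->
  (* parameters *)
  0 < beta0 -> 0 < rho_lo -> rho_lo < 1 -> 1 < rho_hi ->
  0 < lam -> lam < eta -> eta < 1 ->
  (* sequences *)
  (forall k, z k != 0) ->
  (forall k, 0 <= eps k) ->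
  (forall k, enorm (xt k - xhat (theta k)) <= eps k) ->
  (forall k, 0 < alpha k) -> (forall k, 0 < beta k) ->
  (forall k, theta k.+1 = theta k - alpha k *: z k) ->
  (forall k, enorm (z k - grad (g \o xhat) (theta k)) <= (1 - eta) * enorm (z k)) ->
  (* step-size rule *)
  let w k := enorm (grad g (xt k)) + enorm (grad g (xt k.+1)) in
  let epsb k := Num.max (eps k) (eps k.+1) in
  let disc k := (eta - lam) ^+ 2
        - 4 * L_f * (w k * epsb k + L_g * epsb k ^+ 2) / enorm (z k) ^+ 2 in
  let shat k := Num.sqrt (disc k) in
  let alo k := (eta - lam - shat k) / L_f in
  let ahi k := (eta - lam + shat k) / L_f in
  (forall k, 0 <= disc k) ->
  beta 0%N = beta0 ->
  (forall k, alpha k = rho_lo ^+ i k * beta k) ->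
  (forall k, alo k <= rho_lo ^+ i k * beta k <= ahi k) ->
  (forall k j, (j < i k)%N -> ~ (alo k <= rho_lo ^+ j * beta k <= ahi k)) ->
  (forall k, (0 < i k)%N -> rho_lo * ahi k < alpha k) ->
  (forall k, beta k.+1 = rho_hi * alpha k) ->
  enorm (grad (g \o xhat) (theta k)) @[k --> \oo] --> (0 : R).
Proof.
move=> _ _ _ _ _ _ _ _ _ _ [dF _] lipF _ _ Lf_gt0 Lg_gt0 [M gM] _ rl_gt0 _ rh_gt1.
move=> lam_gt0 lam_lt_eta _ _ eps_ge0 _ alpha_gt0 _ thetaS z_err w epsb disc shat alo ahi.
move=> _ _ alphaE alpha_in _ alpha_gt betaS.
have eta_lam_ge0 : 0 <= eta - lam by rewrite subr_ge0 ltW.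
have ahi_bounds k : (eta - lam) / L_f <= ahi k /\ L_f * ahi k <= 2 * (eta - lam).
  have epsb_ge0 : 0 <= epsb k by rewrite le_max eps_ge0.
  have w_ge0 : 0 <= w k by rewrite addr_ge0 ?enorm_ge0.
  apply: step_upper_end_bounds => //.
  by rewrite divr_ge0 ?sqr_ge0 // !mulr_ge0 ?addr_ge0 ?mulr_ge0 ?sqr_ge0 // ltW.
have Lf_alpha k : L_f * alpha k <= 2 * (eta - lam).
  apply: le_trans (proj2 (ahi_bounds k)); rewrite ler_pM2l // alphaE.
  by case/andP: (alpha_in k).
pose m0 := Num.min (alpha 0%N) (rho_lo * ((eta - lam) / L_f)).
have alpha_ge k : m0 <= alpha k.
  apply: backtracking_step_ge (ltW rl_gt0) (ltW rh_gt1) _ (fun k => proj1 (ahi_bounds k)) _ k.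
    by move=> {}k; exact: ltW.
  move=> {}k; have [i0|i_gt0] := posnP (i k.+1); last by right; exact: alpha_gt.
  by left; rewrite alphaE i0 expr0 mul1r betaS.
have f_decrease k : (g \o xhat) (theta k.+1)
                  <= (g \o xhat) (theta k) - m0 * lam * enorm (z k) ^+ 2.
  rewrite thetaS; apply: le_trans (sufficient_decrease dF lipF (z_err k)
                                     (ltW (alpha_gt0 k)) (Lf_alpha k)) _.
  have := ler_wpM2r (mulr_ge0 (ltW lam_gt0) (sqr_ge0 (enorm (z k)))) (alpha_ge k).
  lra.
have z_cvg0 : enorm (z k) @[k --> \oo] --> 0.
  apply: sqr_cvg0 (fun k => enorm_ge0 _) _.
  apply: (bounded_descent_cvg0 _ (fun k => sqr_ge0 _) (fun k => gM _) f_decrease).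
  by rewrite mulr_gt0 // lt_min alpha_gt0 mulr_gt0 ?divr_gt0 ?subr_gt0.
apply: (squeeze_cvgr (f := cst 0) (h := fun k => (2 - eta) * enorm (z k))).
- by apply: nearW => k; rewrite enorm_ge0 inexact_grad_enorm.
- exact: cvg_cst.
- by rewrite -(mulr0 (2 - eta)); exact: cvgMl_tmp.
Qed.
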